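(* Let $k\ge 2$ and $n_0=2^{k+1}-1$. Let $T(n)=(3n+1)/2^{v_2(3n+1)}$ be the Syracuse map, $n_i=T^i(n_0)$ and $v_i=v_2(3n_{i-1}+1)$. Then $v_1=\cdots=v_k=1$, $n_k=2\cdot 3^k-1$, and $$v_{k+1}=\begin{cases}2 & \text{if } k \text{ is even},\\ 3+v_2(k+1) & \text{if } k \text{ is odd}.\end{cases}$$ In particular $v_{k+1}\ge 2$ always, and $v_{k+1}\ge 4$ whenever $k$ is odd.
   Context: $v_2$ is the $2$-adic valuation; $T^i$ the $i$-th iterate. *)

From mathcomp Require Import all_boot.
Set Implicit Arguments. Unset Strict Implicit. Unset Printing Implicit Defensive.

(* 2-adic valuation of a natural number (logn 2 0 = 0, irrelevant here since 3n+1 > 0). *)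
Definition v2 (m : nat) : nat := logn 2 m.

Definition syracuse (n : nat) : nat := (3 * n + 1) %/ 2 ^ v2 (3 * n + 1).

Definition syr_iter (i n0 : nat) : nat := iter i syracuse n0.

Definition syr_v (i n0 : nat) : nat := v2 (3 * syr_iter i.-1 n0 + 1).

From mathcomp Require Import all_boot zify.

(* The first k steps only trade a factor 2 for a factor 3:
   3 (2x - 1) + 1 = 2 (3x - 1), and 3x - 1 is odd for x even, so
   T^i(2^(k+1) - 1) = 2^(k+1-i) 3^i - 1 with v_2 = 1 at each step.
   Hence 3 n_k + 1 = 2 (3^(k+1) - 1), and v_(k+1) = 1 + v_2(3^(k+1) - 1) is
   computed by the lifting-the-exponent formula for p = 2:
   v_2(3^m - 1) = 1 for m odd and v_2(m) + 2 for m even, obtained from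
   3^(2h) - 1 = (3^h - 1)(3^h + 1) and 3^m mod 8. *)

Lemma v2M m n : 0 < m -> 0 < n -> v2 (m * n) = v2 m + v2 n.
Proof. exact: lognM. Qed.

Lemma v2_odd n : odd n -> v2 n = 0.
Proof. by rewrite -coprime2n; apply: logn_coprime. Qed.

Lemma v2_double n : 0 < n -> v2 (2 * n) = (v2 n).+1.
Proof. by move=> n_gt0; rewrite v2M // /v2 logn_prime. Qed.

Lemma v2_exp2 e : v2 (2 ^ e) = e.
Proof. exact: pfactorK. Qed.

Lemma v2_mod_exp2 e n : n %% 2 ^ e.+1 = 2 ^ e -> v2 n = e.
Proof.
move=> n_mod; have -> : n = 2 ^ e * (2 * (n %/ 2 ^ e.+1) + 1).
  by rewrite {1}(divn_eq n (2 ^ e.+1)) n_mod expnS; lia.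
rewrite v2M ?expn_gt0 ?addn1 // v2_exp2 v2_odd ?addn0 //=.
by rewrite mul2n odd_double.
Qed.

Lemma exp3_mod8 m : 3 ^ m %% 8 = if odd m then 3 else 1.
Proof.
elim: m => [|m IHm] //; rewrite expnS -modnMmr IHm /=.
by case: (odd m).
Qed.

Lemma v2_exp3_add1 m : v2 (3 ^ m + 1) = if odd m then 2 else 1.
Proof.
have := exp3_mod8 m; case: (odd m) => mod8; apply: v2_mod_exp2 => /=; lia.
Qed.

Lemma v2_exp3_sub1 m : 0 < m -> v2 (3 ^ m - 1) = if odd m then 1 else (v2 m).+2.
Proof.
elim/ltn_ind: m => m IHm m_gt0; case m_odd: (odd m).
  by have := exp3_mod8 m; rewrite m_odd => mod8; apply: v2_mod_exp2 => /=; lia.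
have [h m_eq] : exists h, m = 2 * h.
  by exists m./2; rewrite -[LHS]odd_double_half m_odd mul2n.
have h_gt0 : 0 < h by lia.
have exp3_gt1 : 1 < 3 ^ h by rewrite -(expn0 3) ltn_exp2l.
have -> : 3 ^ m - 1 = (3 ^ h - 1) * (3 ^ h + 1).
  by rewrite m_eq mul2n -addnn expnD; nia.
rewrite v2M; [|lia|lia]; rewrite IHm; [|lia|lia].
rewrite v2_exp3_add1 m_eq v2_double //; case h_odd: (odd h); last by rewrite addn1.
by rewrite v2_odd.
Qed.

Lemma syracuse_arg_double_pred x : 0 < x -> 3 * (2 * x - 1) + 1 = 2 * (3 * x - 1).
Proof. lia. Qed.

Lemma odd_three_mul_pred x : 0 < x -> ~~ odd x -> odd (3 * x - 1).
Proof. by move=> x_gt0 x_even; rewrite oddB ?oddM ?(negbTE x_even) //; lia. Qed.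

Lemma v2_syracuse_arg_double_pred x : 0 < x -> ~~ odd x -> v2 (3 * (2 * x - 1) + 1) = 1.
Proof.
move=> x_gt0 x_even; rewrite syracuse_arg_double_pred // v2_double; last by lia.
by rewrite v2_odd ?odd_three_mul_pred.
Qed.

Lemma syracuse_double_pred x : 0 < x -> ~~ odd x -> syracuse (2 * x - 1) = 3 * x - 1.
Proof.
move=> x_gt0 x_even; rewrite /syracuse v2_syracuse_arg_double_pred //.
by rewrite syracuse_arg_double_pred // mulKn.
Qed.

Lemma exp2_mul_exp3_even e i : 0 < e -> ~~ odd (2 ^ e * 3 ^ i).
Proof. by rewrite oddM oddX; case: e. Qed.

Lemma syr_iter_pow2_pred k i : i <= k ->
  syr_iter i (2 ^ k.+1 - 1) = 2 * (2 ^ (k - i) * 3 ^ i) - 1.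
Proof.
elim: i => [|i IHi] i_le_k; first by rewrite subn0 muln1 expnS.
rewrite /syr_iter iterS -/(syr_iter i _) IHi; last by lia.
have -> : k - i = (k - i.+1).+1 by lia.
rewrite syracuse_double_pred ?muln_gt0 ?expn_gt0 ?exp2_mul_exp3_even //.
by rewrite !expnS; nia.
Qed.

Theorem mainTheorem15 (k : nat) (hk : 2 <= k) :
  let n0 := 2 ^ k.+1 - 1 in
  (forall i, 1 <= i <= k -> syr_v i n0 = 1) /\
  syr_iter k n0 = 2 * 3 ^ k - 1 /\
  syr_v k.+1 n0 = (if ~~ odd k then 2 else 3 + v2 k.+1) /\
  2 <= syr_v k.+1 n0 /\
  (odd k -> 4 <= syr_v k.+1 n0).
Proof.
move=> n0.
have n_k : syr_iter k n0 = 2 * 3 ^ k - 1 by rewrite syr_iter_pow2_pred // subnn mul1n.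
have v_last : syr_v k.+1 n0 = (if ~~ odd k then 2 else 3 + v2 k.+1).
  rewrite /syr_v /= n_k syracuse_arg_double_pred ?expn_gt0 // -expnS.
  rewrite v2_double ?v2_exp3_sub1 //=; last by rewrite subn_gt0 -(expn0 3) ltn_exp2l.
  by case: (odd k) => //; rewrite add3n.
split.
  move=> i /andP [i_gt0 i_le_k]; rewrite /syr_v syr_iter_pow2_pred; last by lia.
  by rewrite v2_syracuse_arg_double_pred ?muln_gt0 ?expn_gt0 ?exp2_mul_exp3_even ?subn_gt0 //; lia.
split; first exact: n_k.
split; first exact: v_last.
rewrite v_last; split; first by case: (odd k).
move=> k_odd; rewrite k_odd /=.
have : 0 < v2 k.+1 by rewrite /v2 logn_gt0 mem_primes /= dvdn2 /= k_odd.
lia.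
Qed.
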